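(* Let $X$ be a simplicial set and $S\subseteq X^\sharp$ a set of non-degenerate simplices. Let $Y$ be the pushout in simplicial sets of $\bigsqcup_{s\in S}\Delta[m_s]\xleftarrow{\sqcup_s\rho_s}\bigsqcup_{s\in S}\Delta[n_s]\xrightarrow{(\bar s)_s}X$, with canonical map $q:X\to Y$. Then $q$ is degreewise surjective and there is a (unique) map $p:Y\to DX$ with $p\circ q=\eta_X$; $p$ is degreewise surjective. If $Y$ is non-singular, then $p$ is an isomorphism.
   Context: $X^\sharp$ is the set of non-degenerate simplices, $n_x$ the degree of $x$, $\bar x:\Delta[n_x]\to X$ its representing map, $\varepsilon_i:[0]\to[n]$ the operator $0\mapsto i$. A simplicial set is non-singular if every non-degenerate simplex has degreewise injective representing map. The desingularization $DX$ is the image of $X\to\prod_f Y$, $x\mapsto(f(x))_f$, over all quotient maps $f:X\to Y$ (maps $X\to X/R$ for operator-compatible families of equivalence relations) with $Y$ non-singular; $\eta_X:X\to DX$ is the corestriction. Enforcer: for $x\in X^\sharp$ of degree $n$, let $i\sim j$ iff $x\varepsilon_i=x\varepsilon_j$, $i\approx k$ iff some $j$ has $i\le k\le j$ and $i\sim j$, and $\simeq$ the equivalence relation generated by $\approx$; its classes are intervals, and $\rho_x:[n]\to[m_x]$ is the order-preserving surjection onto the ordered quotient $\{0,\dots,n\}/\simeq\cong[m_x]$. *)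

From Stdlib Require Import Relations FunctionalExtensionality PropExtensionality ProofIrrelevance.
From mathcomp Require Import all_boot.
Set Implicit Arguments. Unset Strict Implicit. Unset Printing Implicit Defensive.

Definition monob m n (f : {ffun 'I_m.+1 -> 'I_n.+1}) : bool :=
  [forall i : 'I_m.+1, forall j : 'I_m.+1, (i <= j) ==> (f i <= f j)].

Definition Op m n := {f : {ffun 'I_m.+1 -> 'I_n.+1} | monob f}.
Definition opfun m n (f : Op m n) : 'I_m.+1 -> 'I_n.+1 := fun i => sval f i.

Lemma monob_id n : monob [ffun i : 'I_n.+1 => i].
Proof. by apply/forallP=> i; apply/forallP=> j; rewrite !ffunE; apply/implyP. Qed.

Lemma monob_comp m n p (g : Op n p) (f : Op m n) :
  monob [ffun i => opfun g (opfun f i)].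
Proof.
apply/forallP=> i; apply/forallP=> j; rewrite !ffunE; apply/implyP=> hij.
case: g f => g hg [f hf]; rewrite /opfun /=.
have hfij : f i <= f j by move/forallP: hf => /(_ i) /forallP /(_ j) /implyP; apply.
by move/forallP: hg => /(_ (f i)) /forallP /(_ (f j)) /implyP; apply.
Qed.

Definition idOp n : Op n n := exist (fun f => monob f) _ (monob_id n).
Definition compOp m n p (g : Op n p) (f : Op m n) : Op m p :=
  exist (fun f => monob f) _ (monob_comp g f).

Lemma opP m n (f g : Op m n) : (forall i, opfun f i = opfun g i) -> f = g.
Proof. by move=> h; apply: val_inj; apply/ffunP=> i; exact: h. Qed.

Lemma compOp1 m n (f : Op m n) : compOp f (idOp m) = f.
Proof. by apply: opP=> i; unfold opfun; simpl; rewrite ffunE; unfold opfun; simpl; rewrite ffunE. Qed.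

Lemma compOpA m n p r (h : Op p r) (g : Op n p) (f : Op m n) :
  compOp h (compOp g f) = compOp (compOp h g) f.
Proof. by apply: opP=> i; unfold opfun; simpl; rewrite !ffunE; unfold opfun; simpl; rewrite !ffunE. Qed.

Definition op_surj m n (f : Op m n) : Prop := forall j : 'I_n.+1, exists i, opfun f i = j.

Lemma monob_const n (i : 'I_n.+1) : monob [ffun _ : 'I_1 => i].
Proof. by apply/forallP=> a; apply/forallP=> b; rewrite !ffunE leqnn implybT. Qed.
Definition vtx n (i : 'I_n.+1) : Op 0 n := exist (fun f => monob f) _ (monob_const i).

Record sSet := SSet {
  ssimp :> nat -> Type;
  sact : forall m n, Op m n -> ssimp n -> ssimp m;
  sact_id : forall n (x : ssimp n), sact (idOp n) x = x;
  sact_comp : forall m n p (f : Op m n) (g : Op n p) (x : ssimp p),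
      sact (compOp g f) x = sact f (sact g x)
}.
Arguments sact {s m n}.

Record sMap (X Y : sSet) := SMap {
  smap :> forall n, X n -> Y n;
  smap_nat : forall m n (f : Op m n) (x : X n), smap (sact f x) = sact f (smap x)
}.

Definition dsurj (X Y : sSet) (f : sMap X Y) : Prop :=
  forall n (y : Y n), exists x : X n, f n x = y.

Definition is_iso (X Y : sSet) (f : sMap X Y) : Prop :=
  exists g : sMap Y X, (forall n (x : X n), g n (f n x) = x) /\
                       (forall n (y : Y n), f n (g n y) = y).

Definition degenerate (X : sSet) n (x : X n) : Prop :=
  exists m (s : Op n m) (y : X m), m < n /\ op_surj s /\ x = sact s y.
Definition nondeg (X : sSet) n (x : X n) : Prop := ~ degenerate x.

Definition repr_k (X : sSet) n (x : X n) k : Op k n -> X k := fun f => sact f x.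

Definition nonsingular (X : sSet) : Prop :=
  forall n (x : X n), nondeg x -> forall k, injective (@repr_k X n x k).

Definition Delta (n : nat) : sSet :=
  @SSet (fun k => Op k n) (fun k l (f : Op k l) (g : Op l n) => compOp g f)
        (fun k g => compOp1 g) (fun a b c f g h => compOpA h g f).

Definition repr_map (X : sSet) n (x : X n) : sMap (Delta n) X :=
  @SMap (Delta n) X (fun k g => sact g x)
        (fun a b f g => sact_comp f g x).

Definition op_map n m (r : Op n m) : sMap (Delta n) (Delta m) :=
  @SMap (Delta n) (Delta m) (fun k g => compOp r g)
        (fun a b f g => compOpA r g f).

Definition esim (X : sSet) n (x : X n) (i j : 'I_n.+1) : Prop :=
  sact (vtx i) x = sact (vtx j) x.
Definition eapprox (X : sSet) n (x : X n) (i k : 'I_n.+1) : Prop :=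
  exists j : 'I_n.+1, i <= k <= j /\ esim x i j.
Definition esimeq (X : sSet) n (x : X n) : relation 'I_n.+1 :=
  clos_refl_sym_trans _ (eapprox x).
(* rho : [n] -> [m] is the enforcer of x: the order-preserving surjection *)
(* onto [m] whose fibres are exactly the classes of esimeq x, i.e. the    *)
(* quotient map onto the ordered quotient {0..n}/~= identified with [m]. *)
Definition is_enforcer (X : sSet) n (x : X n) m (rho : Op n m) : Prop :=
  op_surj rho /\ forall i j, opfun rho i = opfun rho j <-> esimeq x i j.

Definition compat_rel (X : sSet) (R : forall n, X n -> X n -> Prop) : Prop :=
  (forall n, equivalence (X n) (R n)) /\
  (forall m n (f : Op m n) x y, R n x y -> R m (sact f x) (sact f y)).

Definition CRel (X : sSet) := {R : forall n, X n -> X n -> Prop | compat_rel R}.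

Section Quot.
Variables (X : sSet) (R : CRel X).
Let Rr := sval R.

Definition qcls n := {P : X n -> Prop | exists x, P = Rr x}.

Lemma Rr_equiv n : equivalence (X n) (@Rr n).
Proof. by case: (svalP R). Qed.
Lemma Rr_compat m n (f : Op m n) x y : Rr x y -> Rr (sact f x) (sact f y).
Proof. by case: (svalP R) => _; apply. Qed.

Lemma qact_cls m n (f : Op m n) x0 :
  (fun z : X m => exists x, Rr x0 x /\ Rr (sact f x) z) = Rr (sact f x0).
Proof.
have [_ Ts Ss] := Rr_equiv m; have [Rf Tn Sn] := Rr_equiv n.
apply: functional_extensionality=> z; apply: propositional_extensionality; split.
- case=> x [h1 h2]; apply: (Ts _ (sact f x)) => //; exact: Rr_compat.
- by move=> h; exists x0; split=> //; apply: Rf.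
Qed.

Lemma qact_ok m n (f : Op m n) (P : qcls n) :
  exists x, (fun z => exists x, sval P x /\ Rr (sact f x) z) = Rr x.
Proof. case: P => P [x0 e] /=; subst P; exists (sact f x0); exact: qact_cls. Qed.

Definition qact m n (f : Op m n) (P : qcls n) : qcls m :=
  exist _ _ (qact_ok f P).

Lemma qclsP n (P Q : qcls n) : sval P = sval Q -> P = Q.
Proof. by case: P Q => P hP [Q hQ] /= e; subst; rewrite (proof_irrelevance _ hP hQ). Qed.

Lemma qact_id n (P : qcls n) : qact (idOp n) P = P.
Proof. by apply: qclsP; case: P => P [x0 e] /=; subst P; rewrite qact_cls sact_id. Qed.

Lemma qact_comp m n p (f : Op m n) (g : Op n p) (P : qcls p) :
  qact (compOp g f) P = qact f (qact g P).
Proof.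
apply: qclsP; case: P => P [x0 e] /=; subst P.
rewrite (qact_cls (compOp g f)) sact_comp.
have E : forall x, (exists x1, Rr x0 x1 /\ Rr (sact g x1) x) = Rr (sact g x0) x.
  by move=> x; rewrite -(qact_cls g x0).
apply: functional_extensionality=> z.
rewrite -(qact_cls f (sact g x0)); apply: propositional_extensionality.
by split; case=> x [h1 h2]; exists x; split=> //; move: h1; rewrite E.
Qed.

Definition quot : sSet := @SSet qcls qact qact_id qact_comp.

Definition qproj_fun n (x : X n) : quot n := exist _ (Rr x) (ex_intro _ x erefl).

Lemma qproj_nat m n (f : Op m n) (x : X n) :
  qproj_fun (sact f x) = sact f (qproj_fun x).
Proof. by apply: qclsP; rewrite /= qact_cls. Qed.

Definition qproj : sMap X quot := SMap qproj_nat.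
End Quot.

(* Desingularization DX: image of X -> prod_R X/R over all quotients    *)
(* X/R that are non-singular; eta_X the corestriction.                  *)
Section Desing.
Variable X : sSet.

Definition NSidx := {R : CRel X | nonsingular (quot R)}.
Definition prodX n := forall i : NSidx, quot (sval i) n.
Definition eta0 n (x : X n) : prodX n := fun i => qproj (sval i) n x.
Definition DXs n := {y : prodX n | exists x : X n, y = eta0 x}.

Definition pact m n (f : Op m n) (y : prodX n) : prodX m := fun i => sact f (y i).

Lemma pact_eta0 m n (f : Op m n) x : pact f (eta0 x) = eta0 (sact f x).
Proof.
by apply: functional_extensionality_dep=> i; rewrite /pact /eta0 smap_nat.
Qed.

Lemma dact_ok m n (f : Op m n) (y : DXs n) : exists x, pact f (sval y) = eta0 x.
Proof. case: y => y [x e] /=; subst y; exists (sact f x); exact: pact_eta0. Qed.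

Definition dact m n (f : Op m n) (y : DXs n) : DXs m := exist _ _ (dact_ok f y).

Lemma DXsP n (y z : DXs n) : sval y = sval z -> y = z.
Proof. by case: y z => y hy [z hz] /= e; subst; rewrite (proof_irrelevance _ hy hz). Qed.

Lemma dact_id n (y : DXs n) : dact (idOp n) y = y.
Proof.
apply: DXsP; apply: functional_extensionality_dep=> i /=.
by rewrite /pact sact_id.
Qed.

Lemma dact_comp m n p (f : Op m n) (g : Op n p) (y : DXs p) :
  dact (compOp g f) y = dact f (dact g y).
Proof.
apply: DXsP; apply: functional_extensionality_dep=> i /=.
by rewrite /pact sact_comp.
Qed.

Definition DX : sSet := @SSet DXs dact dact_id dact_comp.

Definition eta_fun n (x : X n) : DX n := exist _ (eta0 x) (ex_intro _ x erefl).

Lemma eta_nat m n (f : Op m n) (x : X n) : eta_fun (sact f x) = sact f (eta_fun x).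
Proof. by apply: DXsP; rewrite /= pact_eta0. Qed.

Definition eta : sMap X DX := SMap eta_nat.
End Desing.

(* Pushouts of  coprod_s Delta[m_s] <- coprod_s Delta[n_s] -> X ,        *)
(* stated by the universal property; a map out of a coproduct is a       *)
(* family of maps out of the summands.                                   *)
Definition is_pushout (X : sSet) (I : Type) (nI mI : I -> nat)
  (rho : forall s, Op (nI s) (mI s)) (sb : forall s, sMap (Delta (nI s)) X)
  (Y : sSet) (q : sMap X Y) (j : forall s, sMap (Delta (mI s)) Y) : Prop :=
  (forall s k (t : Op k (nI s)), j s k (op_map (rho s) k t) = q k (sb s k t)) /\
  (forall (Z : sSet) (g : sMap X Z) (h : forall s, sMap (Delta (mI s)) Z),
     (forall s k (t : Op k (nI s)), h s k (op_map (rho s) k t) = g k (sb s k t)) ->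
     exists u : sMap Y Z,
       ((forall n (x : X n), u n (q n x) = g n x) /\
        (forall s k (t : Op k (mI s)), u k (j s k t) = h s k t)) /\
       (forall u' : sMap Y Z,
          (forall n (x : X n), u' n (q n x) = g n x) ->
          (forall s k (t : Op k (mI s)), u' k (j s k t) = h s k t) ->
          forall n (y : Y n), u' n y = u n y)).

Definition sidx (X : sSet) (S : forall n, X n -> Prop) := {n : nat & {x : X n | S n x}}.
Definition sdeg (X : sSet) (S : forall n, X n -> Prop) (s : sidx S) : nat := projT1 s.
Definition ssx (X : sSet) (S : forall n, X n -> Prop) (s : sidx S) : X (sdeg s) :=
  sval (projT2 s).

From Stdlib Require Import FunctionalExtensionality PropExtensionality ProofIrrelevance ClassicalEpsilon Classical.
From mathcomp Require Import all_boot.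
Set Implicit Arguments. Unset Strict Implicit. Unset Printing Implicit Defensive.

(* Since every rho_s is surjective, each j_s factors through q along a section
   of rho_s; so q is surjective, and a map out of X descends to Y as soon as its
   composite with s-bar is constant on the fibres of rho_s.  The unit eta has
   this property: in a non-singular quotient Z the image of s is t^* w with w
   non-degenerate, so the vertices of w are pairwise distinct; hence the monotone
   t identifies i and j whenever s eps_i = s eps_j, and therefore identifies
   every ~=-class, i.e. t factors through rho_s.  Finally, if Y is non-singular
   then Y = X/ker q is one of the quotients over which DX is formed, so
   eta a = eta b forces q a = q b and p is injective. *)

Lemma sig_eqP (A : Type) (P : A -> Prop) (a b : {x | P x}) : sval a = sval b -> a = b.
Proof. by case: a b => a ha [b hb] /= e; subst; rewrite (proof_irrelevance _ ha hb). Qed.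

Lemma opfun_comp m n p (g : Op n p) (f : Op m n) i :
  opfun (compOp g f) i = opfun g (opfun f i).
Proof. by rewrite /opfun /= ffunE. Qed.

Lemma comp1Op m n (f : Op m n) : compOp (idOp n) f = f.
Proof. by apply: opP => i; rewrite opfun_comp /opfun /= ffunE. Qed.

Lemma opfun_mono m n (f : Op m n) (i j : 'I_m.+1) : i <= j -> opfun f i <= opfun f j.
Proof.
case: f => f hf; rewrite /opfun /= => hij.
by move/forallP: hf => /(_ i) /forallP /(_ j) /implyP; apply.
Qed.

Lemma opfun_vtx n (i : 'I_n.+1) k : opfun (vtx i) k = i.
Proof. by rewrite /opfun /= ffunE. Qed.

Lemma compOp_vtx n p (g : Op n p) (i : 'I_n.+1) : compOp g (vtx i) = vtx (opfun g i).
Proof. by apply: opP => k; rewrite opfun_comp !opfun_vtx. Qed.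

(* The section picks the least element of each fibre, which is monotone. *)
Lemma op_surj_section n m (r : Op n m) : op_surj r ->
  exists s : Op m n, compOp r s = idOp m.
Proof.
move=> r_surj.
pose P (j : 'I_m.+1) : pred nat := fun i => (i < n.+1) && (opfun r (inord i) == j).
have fibre_nonempty j : exists i, P j i.
  by case: (r_surj j) => i hi; exists (val i); rewrite /P ltn_ord inord_val hi /=.
pose s j : 'I_n.+1 := inord (ex_minn (fibre_nonempty j)).
have rs j : opfun r (s j) = j by rewrite /s; case: ex_minnP => a /andP [_ /eqP].
have s_mono : monob [ffun j => s j].
  apply/forallP=> j1; apply/forallP=> j2; rewrite !ffunE; apply/implyP=> le12.
  rewrite /s; case: ex_minnP => a1 /andP [a1n /eqP ha1] min1.
  case: ex_minnP => a2 /andP [a2n /eqP ha2] _.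
  rewrite !inordK //; case: leqP => // lt21.
  have : opfun r (inord a2) <= opfun r (inord a1) by apply: opfun_mono; rewrite !inordK // ltnW.
  rewrite ha1 ha2 => le21.
  have e12 : j1 = j2 by apply: val_inj; apply/eqP; rewrite eqn_leq le12 le21.
  by have := min1 a2; rewrite /P a2n ha2 -e12 eqxx leqNgt lt21 => /(_ isT).
exists (exist (fun f => monob f) _ s_mono).
by apply: opP => j; rewrite opfun_comp {2 3}/opfun /= !ffunE rs.
Qed.

Lemma nondeg_decomposition (Z : sSet) n (z : Z n) :
  exists m (t : Op n m) (w : Z m), op_surj t /\ nondeg w /\ z = sact t w.
Proof.
elim/ltn_ind: n z => n IH z.
case: (classic (degenerate z)) => [[m [s [y [lt_mn [s_surj ->]]]]] | z_nd].
  have [m' [t [w [t_surj [w_nd ->]]]]] := IH m lt_mn y.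
  exists m', (compOp t s), w; split; last by rewrite sact_comp.
  move=> i; case: (t_surj i) => a <-; case: (s_surj a) => b <-.
  by exists b; rewrite opfun_comp.
exists n, (idOp n), z; rewrite sact_id; split=> //.
by move=> i; exists i; rewrite /opfun /= ffunE.
Qed.

Lemma nonsingular_vtx_inj (Z : sSet) n (w : Z n) (u v : 'I_n.+1) :
  nonsingular Z -> nondeg w -> sact (vtx u) w = sact (vtx v) w -> u = v.
Proof.
move=> Z_ns w_nd e.
by rewrite -(opfun_vtx u ord0) (Z_ns _ _ w_nd 0 (vtx u) (vtx v) e) opfun_vtx.
Qed.

Section Enforcer.
Variables (X Z : sSet) (pi : sMap X Z) (n : nat) (x : X n).
Hypothesis Z_ns : nonsingular Z.

Lemma esimeq_image (m : nat) (t : Op n m) (w : Z m) :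
  nondeg w -> pi n x = sact t w ->
  forall i i', esimeq x i i' -> opfun t i = opfun t i'.
Proof.
move=> w_nd pix.
have esim_image i i' : esim x i i' -> opfun t i = opfun t i'.
  move=> e; apply: (nonsingular_vtx_inj Z_ns w_nd).
  by rewrite -!compOp_vtx !sact_comp -pix -!smap_nat e.
move=> i i'; elim=> [{}i {}i' [k [/andP [le_ik le_ki'] /esim_image tk]] | // | // | ].
- apply: val_inj; apply/eqP; rewrite eqn_leq (opfun_mono t le_ik) /=.
  by rewrite tk (opfun_mono t le_ki').
- by move=> ? ? ? _ -> _ ->.
Qed.

Lemma sact_enforcer_eq m (r : Op n m) k (a b : Op k n) :
  is_enforcer x r -> compOp r a = compOp r b -> sact a (pi n x) = sact b (pi n x).
Proof.
move=> [_ r_fibres] rab.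
have [m' [t [w [_ [w_nd pix]]]]] := nondeg_decomposition (pi n x).
have tab : compOp t a = compOp t b.
  apply: opP => l; rewrite !opfun_comp; apply: (esimeq_image w_nd pix).
  by apply/r_fibres; rewrite -!opfun_comp rab.
by rewrite pix -!sact_comp tab.
Qed.

End Enforcer.

Definition compM (A B C : sSet) (f : sMap A B) (g : sMap B C) : sMap A C :=
  @SMap A C (fun n x => g n (f n x))
    (fun m n h x => etrans (f_equal (g m) (smap_nat f h x)) (smap_nat g h (f n x))).

Definition idM (A : sSet) : sMap A A := @SMap A A (fun n x => x) (fun _ _ _ _ => erefl).

Section Image.
Variables (X Y : sSet) (q : sMap X Y).

Definition imT n := {y : Y n | exists x, q n x = y}.

Lemma imact_ok m n (f : Op m n) (y : imT n) : exists x, q m x = sact f (sval y).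
Proof. by case: y => y [x e] /=; exists (sact f x); rewrite -e; exact: smap_nat. Qed.

Definition imact m n (f : Op m n) (y : imT n) : imT m := exist _ _ (imact_ok f y).

Lemma imact_id n (y : imT n) : imact (idOp n) y = y.
Proof. by apply: sig_eqP; rewrite /= sact_id. Qed.

Lemma imact_comp m n p (f : Op m n) (g : Op n p) (y : imT p) :
  imact (compOp g f) y = imact f (imact g y).
Proof. by apply: sig_eqP; rewrite /= sact_comp. Qed.

Definition Im : sSet := @SSet imT imact imact_id imact_comp.

Definition im_incl : sMap Im Y := @SMap Im Y (fun n y => sval y) (fun _ _ _ _ => erefl).

Definition corestr_fun n (x : X n) : Im n := exist _ (q n x) (ex_intro _ x erefl).

Lemma corestr_nat m n (f : Op m n) (x : X n) :
  corestr_fun (sact f x) = sact f (corestr_fun x).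
Proof. by apply: sig_eqP; rewrite /= smap_nat. Qed.

Definition corestr : sMap X Im := SMap corestr_nat.

End Image.

Section PushoutSurj.
Variables (X : sSet) (I : Type) (nI mI : I -> nat) (rho : forall s, Op (nI s) (mI s)).
Variables (sb : forall s, sMap (Delta (nI s)) X) (Y : sSet) (q : sMap X Y).
Variable j : forall s, sMap (Delta (mI s)) Y.
Hypothesis Hpo : is_pushout rho sb q j.
Hypothesis rho_surj : forall s, op_surj (rho s).

Let sec s : Op (mI s) (nI s) :=
  proj1_sig (constructive_indefinite_description _ (op_surj_section (@rho_surj s))).

Let rho_sec s : compOp (rho s) (sec s) = idOp (mI s).
Proof. by rewrite /sec; case: constructive_indefinite_description. Qed.

Let rho_secK s k (t : Op k (mI s)) : compOp (rho s) (compOp (sec s) t) = t.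
Proof. by rewrite compOpA rho_sec comp1Op. Qed.

Lemma pushout_jE s k (t : Op k (mI s)) : j s k t = q k (sb s k (compOp (sec s) t)).
Proof. by rewrite -{1}(rho_secK t); exact: (proj1 Hpo). Qed.

Lemma pushout_ext (Z : sSet) (u u' : sMap Y Z) :
  (forall n (x : X n), u n (q n x) = u' n (q n x)) -> forall n (y : Y n), u n y = u' n y.
Proof.
move=> uq n y.
have compat s k (t : Op k (nI s)) :
    compM (j s) u k (op_map (rho s) k t) = compM q u k (sb s k t).
  by rewrite /= (proj1 Hpo).
have [w [_ w_uniq]] := proj2 Hpo Z (compM q u) (fun s => compM (j s) u) compat.
have u'w : forall n (y : Y n), u' n y = w n y.
  apply: w_uniq => [n' x | s k t] /=; first by rewrite uq.
  by rewrite pushout_jE -uq -pushout_jE.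
by rewrite u'w; apply: w_uniq.
Qed.

Lemma pushout_factor (Z : sSet) (g : sMap X Z) :
  (forall s k (a b : Op k (nI s)),
     compOp (rho s) a = compOp (rho s) b -> g k (sb s k a) = g k (sb s k b)) ->
  exists u : sMap Y Z, forall n (x : X n), u n (q n x) = g n x.
Proof.
move=> g_fibres.
pose h s := compM (compM (op_map (sec s)) (sb s)) g.
have compat s k (t : Op k (nI s)) : h s k (op_map (rho s) k t) = g k (sb s k t).
  by apply: g_fibres; rewrite /= rho_secK.
by have [u [[uq _] _]] := proj2 Hpo Z g h compat; exists u.
Qed.

Lemma pushout_dsurj : dsurj q.
Proof.
have [u uq] : exists u : sMap Y (Im q), forall n (x : X n), u n (q n x) = corestr q n x.
  apply: pushout_factor => s k a b rab; apply: sig_eqP => /=.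
  by rewrite -!(proj1 Hpo) /= rab.
move=> n y; have [x qx] := svalP (u n y); exists x; rewrite qx.
by apply: (pushout_ext (u := compM u (im_incl q)) (u' := idM Y)) => n' x' /=; rewrite uq.
Qed.

End PushoutSurj.

Section Desingularization.
Variable X : sSet.

Lemma eta_dsurj : dsurj (eta X).
Proof. by move=> n [d [x e]]; exists x; apply: DXsP => /=; rewrite e. Qed.

Lemma eta_enforcer_eq n (x : X n) m (r : Op n m) k (a b : Op k n) :
  is_enforcer x r -> compOp r a = compOp r b -> eta X k (sact a x) = eta X k (sact b x).
Proof.
move=> r_enf rab; apply: DXsP; apply: functional_extensionality_dep => i /=.
by rewrite /eta0 !smap_nat (sact_enforcer_eq (qproj (sval i)) (svalP i) r_enf rab).
Qed.

Variables (Y : sSet) (q : sMap X Y).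

Lemma ker_compat : compat_rel (fun n (a b : X n) => q n a = q n b).
Proof.
split=> [n|m n f a b e]; last by rewrite !smap_nat e.
by split=> [a | a b c -> | a b ->].
Qed.

Definition ker_crel : CRel X := exist _ _ ker_compat.

Lemma qproj_ker_eq n (a b : X n) :
  qproj ker_crel n a = qproj ker_crel n b <-> q n a = q n b.
Proof.
split=> [e | e]; first by have := f_equal (fun P => sval P b) e => /= ->.
apply: qclsP => /=; apply: functional_extensionality => z.
by apply: propositional_extensionality; rewrite e.
Qed.

Lemma qproj_ker_degenerate n (x : X n) :
  dsurj q -> degenerate (q n x) -> degenerate (qproj ker_crel n x).
Proof.
move=> q_surj [m [s [y [lt_mn [s_surj e]]]]]; have [x0 qx0] := q_surj m y.
exists m, s, (qproj ker_crel m x0); do 2!split=> //.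
by rewrite -smap_nat; apply/qproj_ker_eq; rewrite smap_nat qx0.
Qed.

Lemma quot_ker_nonsingular : dsurj q -> nonsingular Y -> nonsingular (quot ker_crel).
Proof.
move=> q_surj Y_ns n w w_nd k f g.
have [x ew] : exists x, w = qproj ker_crel n x.
  by case: w {w_nd} => P [x eP]; exists x; apply: qclsP.
rewrite ew in w_nd *; rewrite /repr_k -!smap_nat => /qproj_ker_eq; rewrite !smap_nat.
by apply: Y_ns => /(qproj_ker_degenerate q_surj).
Qed.

Lemma eta_eq_nonsingular n (a b : X n) :
  dsurj q -> nonsingular Y -> eta X n a = eta X n b -> q n a = q n b.
Proof.
move=> q_surj Y_ns.
pose R : NSidx X := exist _ ker_crel (quot_ker_nonsingular q_surj Y_ns).
by move=> /(f_equal (fun d => sval d R)) /qproj_ker_eq.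
Qed.

Lemma is_iso_eta_factor (p : sMap Y (DX X)) :
  dsurj q -> nonsingular Y -> (forall n (x : X n), p n (q n x) = eta X n x) -> is_iso p.
Proof.
move=> q_surj Y_ns pq.
pose xof n (d : DX X n) := proj1_sig (constructive_indefinite_description _ (eta_dsurj d)).
have xofK n (d : DX X n) : eta X n (xof n d) = d.
  by rewrite /xof; case: constructive_indefinite_description.
have ginv_nat m n (f : Op m n) (d : DX X n) :
    q m (xof m (sact f d)) = sact f (q n (xof n d)).
  by rewrite -smap_nat; apply: eta_eq_nonsingular => //; rewrite smap_nat !xofK.
exists (@SMap (DX X) Y (fun n d => q n (xof n d)) ginv_nat); split=> [n y | n d] /=.
  by have [x <-] := q_surj n y; apply: eta_eq_nonsingular => //; rewrite xofK pq.
by rewrite pq xofK.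
Qed.

End Desingularization.

Theorem mainTheorem6
  (X : sSet) (S : forall n, X n -> Prop)
  (HS : forall n (x : X n), S n x -> nondeg x)
  (m : sidx S -> nat) (rho : forall s : sidx S, Op (sdeg s) (m s))
  (Hrho : forall s : sidx S, is_enforcer (ssx s) (rho s))
  (Y : sSet) (q : sMap X Y) (j : forall s : sidx S, sMap (Delta (m s)) Y)
  (Hpo : is_pushout rho (fun s => repr_map (ssx s)) q j) :
  dsurj q /\
  exists p : sMap Y (DX X),
    (forall n (x : X n), p n (q n x) = eta X n x) /\
    (forall p' : sMap Y (DX X), (forall n (x : X n), p' n (q n x) = eta X n x) ->
       forall n (y : Y n), p' n y = p n y) /\
    dsurj p /\
    (nonsingular Y -> is_iso p).
Proof.
have rho_surj s : op_surj (rho s) := proj1 (Hrho s).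
have q_surj := pushout_dsurj Hpo rho_surj.
have [p pq] : exists p : sMap Y (DX X), forall n (x : X n), p n (q n x) = eta X n x.
  apply: (pushout_factor Hpo rho_surj) => s k a b.
  exact: eta_enforcer_eq (Hrho s).
split=> //; exists p; split=> //; split.
  by move=> p' p'q; apply: (pushout_ext Hpo rho_surj) => n x; rewrite p'q pq.
split; last by move=> Y_ns; exact: is_iso_eta_factor q_surj Y_ns pq.
by move=> n d; have [x <-] := eta_dsurj d; exists (q n x); rewrite pq.
Qed.
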